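(* Every finite abelian group is completely $D$-realisable.
   Context: All groups are finite. $D(H)=H'$ denotes the derived subgroup of $H$. A finite group $G$ is completely $D$-realisable if there is a finite group $H$ such that: (i) $G\cong D(H)$; (ii) for every subgroup $G_1\leq G$ there exists $H_1\leq H$ with $G_1\cong D(H_1)$; (iii) for every $H_1\leq H$ there exists $G_1\leq G$ with $D(H_1)\cong G_1$. *)

From mathcomp Require Import all_boot all_fingroup all_solvable.
Set Implicit Arguments. Unset Strict Implicit. Unset Printing Implicit Defensive.
Local Open Scope group_scope.

(* D(H) = H' = [~: H, H] (derived subgroup, H^`(1) in MathComp). *)
Definition completely_D_realisable (gT : finGroupType) (G : {group gT}) : Prop :=
  exists (hT : finGroupType) (H : {group hT}),
    [/\ G \isog H^`(1),
        (forall G1 : {group gT}, G1 \subset G ->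
           exists2 H1 : {group hT}, H1 \subset H & G1 \isog H1^`(1))
      & (forall H1 : {group hT}, H1 \subset H ->
           exists2 G1 : {group gT}, G1 \subset G & H1^`(1) \isog G1)].

Set Warnings "-redundant-canonical-projection -notation-overridden".
From HB Require Import structures.
From mathcomp Require Import all_boot all_fingroup all_solvable.
Set Implicit Arguments. Unset Strict Implicit. Unset Printing Implicit Defensive.
Local Open Scope group_scope.

(* For abelian G take H = G wr C2 = (G x G) >< <swap>.  Commutators in H have
   trivial swap component, and (a, b) swap^s |-> a * b is a homomorphism onto
   the abelian group G, so they also have coordinate product 1: H' lies in the
   antidiagonal {(u^-1, u)}.  Conversely (u^-1, u) = [(u, 1), swap], so H' is
   the antidiagonal, a copy of G.  The construction is monotone in G, which
   gives (ii), and the derived subgroup of any subgroup of H lies in H', a copy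
   of G, which gives (iii). *)

Lemma sub_isog_subgroup (aT rT : finGroupType) (G : {group aT})
    (H K : {group rT}) :
  G \isog H -> K \subset H -> exists2 G1 : {group aT}, G1 \subset G & K \isog G1.
Proof.
case/isogP=> f injf fG sKH; exists (f @*^-1 K)%G; first exact: morphpre_sub.
have sKfG : K \subset f @* G by rewrite fG.
by rewrite isog_sym -[X in _ \isog X](morphpreK sKfG) sub_isog ?morphpre_sub.
Qed.

Section Wreath2.
Variable gT : finGroupType.

(* [(a, b, s)] stands for [(a, b) * swap ^+ s], where [swap] exchanges the
   two coordinates. *)
Definition wreath2 : Type := (gT * gT * bool)%type.
HB.instance Definition _ := Finite.on wreath2.

Definition wr2_mul (x y : wreath2) : wreath2 :=
  let: (a, b, s) := x in let: (c, d, t) := y in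
  if s then (a * d, b * c, ~~ t) else (a * c, b * d, t).

Definition wr2_inv (x : wreath2) : wreath2 :=
  let: (a, b, s) := x in if s then (b^-1, a^-1, true) else (a^-1, b^-1, false).

Definition wr2_one : wreath2 := (1, 1, false).

Lemma wr2_mulA : associative wr2_mul.
Proof. by move=> [[a b] []] [[c d] []] [[e f] []]; rewrite /= !mulgA. Qed.

Lemma wr2_mul1 : left_id wr2_one wr2_mul.
Proof. by move=> [[a b] []]; rewrite /= !mul1g. Qed.

Lemma wr2_mulV : left_inverse wr2_one wr2_inv wr2_mul.
Proof. by move=> [[a b] []]; rewrite /= !mulVg. Qed.

HB.instance Definition _ := Finite_isGroup.Build wreath2 wr2_mulA wr2_mul1 wr2_mulV.

End Wreath2.

Section Wreath2Theory.
Variable gT : finGroupType.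
Implicit Types (A B : {group gT}) (x y : wreath2 gT).

Lemma wr2_mulE x y : x * y = wr2_mul x y. Proof. by []. Qed.
Lemma wr2_invE x : x^-1 = wr2_inv x. Proof. by []. Qed.

Definition wr2 (A : {set gT}) := [set x : wreath2 gT | (x.1.1 \in A) && (x.1.2 \in A)].

Lemma wr2_group_set A : group_set (wr2 A).
Proof.
apply/group_setP; split; first by rewrite inE /= group1.
move=> [[a b] s] [[c d] t]; rewrite !inE /= => /andP[Aa Ab] /andP[Ac Ad].
by rewrite wr2_mulE; case: s => /=; rewrite !groupM.
Qed.
Canonical wr2_group A := Group (wr2_group_set A).

Lemma wr2S A B : A \subset B -> wr2 A \subset wr2 B.
Proof.
move/subsetP=> sAB; apply/subsetP=> x; rewrite !inE => /andP[Ax1 Ax2].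
by rewrite !sAB.
Qed.

Lemma wr2_commg_unswapped x y : [~ x, y].2 = false.
Proof. by move: x y => [[a b] []] [[c d] []]. Qed.

Definition antidiag (u : gT) : wreath2 gT := (u^-1, u, false).

Lemma antidiag_inj : injective antidiag.
Proof. by move=> u v []. Qed.

Lemma antidiag_commg u : antidiag u = [~ ((u, 1, false) : wreath2 gT), (1, 1, true)].
Proof. by rewrite /antidiag /commg /conjg !wr2_mulE !wr2_invE /= !invg1 !mulg1 !mul1g. Qed.

Definition wr2_prod x : gT := x.1.1 * x.1.2.

Section Abelian.
Variable A : {group gT}.
Hypothesis abA : abelian A.

Lemma antidiag_morph : {in A &, {morph antidiag : u v / u * v}}.
Proof.
move=> u v Au Av; rewrite /antidiag wr2_mulE /=.
by rewrite -[u^-1 * _]invMg (centsP abA v Av u Au).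
Qed.
Canonical antidiag_morphism := Morphism antidiag_morph.

Lemma wr2_prod_morph : {in wr2 A &, {morph wr2_prod : x y / x * y}}.
Proof.
move=> [[a b] s] [[c d] t]; rewrite !inE /= => /andP[Aa Ab] /andP[Ac Ad].
rewrite wr2_mulE /wr2_prod; case: s => /=; rewrite !mulgA.
  rewrite -(mulgA a d b) (centsP abA d Ad b Ab) !mulgA.
  by rewrite -(mulgA _ d c) (centsP abA d Ad c Ac) !mulgA.
by rewrite -(mulgA a c b) (centsP abA c Ac b Ab) !mulgA.
Qed.
Canonical wr2_prod_morphism := Morphism wr2_prod_morph.

Lemma der1_wr2 : (wr2 A)^`(1) = antidiag @* A.
Proof.
apply/eqP; rewrite eqEsubset morphimEdom; apply/andP; split; last first.
  apply/subsetP=> _ /imsetP[u Au ->]; change (antidiag u \in (wr2 A)^`(1)).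
  by rewrite antidiag_commg derg1 mem_commg // inE /= ?Au group1.
rewrite derg1 gen_subG; apply/subsetP=> _ /imset2P[x y Wx Wy ->].
have: [~ x, y] \in wr2 A by rewrite groupR.
have: wr2_prod [~ x, y] = 1.
  rewrite (morphR wr2_prod_morphism Wx Wy); apply/eqP/commgP.
  move: Wx Wy; rewrite !inE => /andP[Ax1 Ax2] /andP[Ay1 Ay2].
  by apply: (centsP abA); rewrite groupM.
move: (wr2_commg_unswapped x y); case: [~ x, y] => [[p q] _] /= ->.
rewrite /wr2_prod inE /= => pq1 /andP[_ Aq]; apply/imsetP; exists q => //.
by rewrite /= /antidiag -[p](mulgK q) pq1 mul1g.
Qed.

Lemma isog_der1_wr2 : A \isog (wr2 A)^`(1).
Proof.
by rewrite der1_wr2 sub_isog //; apply/injmP=> u v _ _ /antidiag_inj.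
Qed.

End Abelian.
End Wreath2Theory.

Theorem theorem3p1 (gT : finGroupType) (G : {group gT}) :
  abelian G -> completely_D_realisable G.
Proof.
move=> abG; exists (wreath2 gT), (wr2_group G); split.
- exact: isog_der1_wr2.
- move=> G1 sG1; exists (wr2_group G1); first exact: wr2S.
  exact: isog_der1_wr2 (abelianS sG1 abG).
- move=> H1 sH1; apply: sub_isog_subgroup (isog_der1_wr2 abG) _.
  exact: dergS.
Qed.
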